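(* Let $p_1,p_2$ be distinct primes with $p_1\equiv p_2\equiv 1\pmod 4$ and let $\varepsilon_2=x+y\sqrt{p_1p_2}$ (with $x,y$ integers or half-integers) be the fundamental unit of $\mathbb{Q}(\sqrt{p_1p_2})$. If $\varepsilon_2$ has norm $1$, then neither $x+1$ nor $x-1$ is a square in $\mathbb{N}$. *)

(* The real quadratic field Q(sqrt d) is realised inside algC,
   with sqrt d := sqrtC d (the nonnegative square root). *)
From HB Require Import structures.
From mathcomp Require Import all_boot all_order all_algebra all_field.
Set Implicit Arguments. Unset Strict Implicit. Unset Printing Implicit Defensive.
Import Order.TTheory GRing.Theory Num.Theory.
Local Open Scope ring_scope.

Definition qelt (d : nat) (a b : int) : algC :=
  (a%:~R + b%:~R * sqrtC (d%:R)) / 2%:R.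

(* For squarefree d = 1 mod 4, the ring of integers is Z[(1+sqrt d)/2], whose
   elements are exactly (a + b sqrt d)/2 with a = b mod 2; the norm of
   (a + b sqrt d)/2 is (a^2 - d b^2)/4. *)
Definition in_OK (a b : int) : bool := ~~ odd `|a - b|%N.
Definition normQ (d : nat) (a b : int) : rat :=
  ((a ^+ 2 - (d%:Z) * b ^+ 2)%:~R) / 4%:R.

Definition is_unitOK (d : nat) (a b : int) : Prop :=
  in_OK a b /\ (normQ d a b = 1 \/ normQ d a b = -1).

Definition fundamental_unit (d : nat) (a b : int) : Prop :=
  is_unitOK d a b /\ 1 < qelt d a b /\
  forall a' b' : int, is_unitOK d a' b' -> 1 < qelt d a' b' ->
    qelt d a b <= qelt d a' b'.

(* If x = a/2 and x + s = n^2 with s = -1 or 1, then a^2 - 4 = 4 n^2 (n^2 - 2s), so the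
   norm equation a^2 - d b^2 = 4 becomes d b^2 = 4 n^2 (n^2 - 2s).  This is impossible for
   d = 1 mod 4 and b <> 0: for b odd compare both sides mod 4; for b = 2c and n odd,
   n^2 (n^2 - 2s) = 3 mod 4 while d c^2 is 0 or 1 mod 4; for b = 2c and n = 2m the two
   sides d c^2 and 8 m^2 (2 m^2 - s) have 2-adic valuations of different parity. *)
From HB Require Import structures.
From mathcomp Require Import all_boot all_order all_algebra all_field.
From mathcomp Require Import zify ring.
Import Order.TTheory GRing.Theory Num.Theory.
Local Open Scope ring_scope.

Lemma logn2_odd_mul_sq (D B : nat) :
  odd D -> (0 < B)%N -> logn 2 (D * B ^ 2) = (logn 2 B).*2.
Proof.
move=> oD B0; have D0 : (0 < D)%N by case: D oD.
rewrite lognM ?expn_gt0 ?B0 // lognX (@logn_coprime 2 D) ?coprime2n ?oD //.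
by rewrite mul2n.
Qed.

Lemma odd_mul_sq_neq_double (D W B M : nat) :
  odd D -> odd W -> (0 < B)%N -> (D * B ^ 2 != 2 * (W * M ^ 2))%N.
Proof.
move=> oD oW B0; apply/eqP => E.
have [M0|M0] := posnP M.
  have : (0 < D * B ^ 2)%N by rewrite muln_gt0 expn_gt0 B0 andbT; case: (D) oD.
  by rewrite E M0 expnS mul0n !muln0.
have := congr1 (fun x => odd (logn 2 x)) E.
rewrite /= logn2_odd_mul_sq // lognM ?muln_gt0 ?expn_gt0 ?M0 //; last by case: (W) oW.
by rewrite logn2_odd_mul_sq // (_ : logn 2 2 = 1)%N // oddD !odd_double.
Qed.

Lemma quartic_neq_mul_sq (d n B : nat) (s : int) :
  (d %% 4 = 1)%N -> (0 < B)%N -> s = 1 \/ s = -1 ->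
  4 * (n%:Z ^+ 2 * (n%:Z ^+ 2 + 2 * s)) != d%:Z * B%:Z ^+ 2.
Proof.
move=> d4 B0 s1; apply/eqP => E.
have [q dq] : exists q, d = (4 * q + 1)%N by exists (d %/ 4)%N; lia.
subst d.
have [C [BC|BC]] : exists C, (B = 2 * C + 1 \/ B = 2 * C)%N by exists (B %/ 2)%N; lia.
  by subst B; case: s1 => ?; subst s; lia.
subst B; have C0 : (0 < C)%N by lia.
have [m [nm|nm]] : exists m, (n = 2 * m \/ n = 2 * m + 1)%N by exists (n %/ 2)%N; lia.
  subst n; have m0 : (0 < m)%N.
    rewrite lt0n; apply/negP => /eqP m0; subst m.
    have : (0 < C ^ 2)%N by rewrite expn_gt0 C0.
    nia.
  have m2 : (1 <= m ^ 2)%N by rewrite expn_gt0 m0.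
  have oD : odd (4 * q + 1) by rewrite oddD oddM.
  case: s1 => ?; subst s.
    have oW : odd (2 * m ^ 2 + 1) by rewrite oddD oddM.
    by apply: (negP (odd_mul_sq_neq_double _ _ _ (2 * m) oD oW C0)); apply/eqP; lia.
  have oW : odd (2 * m ^ 2 - 1) by rewrite oddB ?oddM //; lia.
  by apply: (negP (odd_mul_sq_neq_double _ _ _ (2 * m) oD oW C0)); apply/eqP; lia.
subst n.
have [e [Ce|Ce]] : exists e, (C = 2 * e \/ C = 2 * e + 1)%N by exists (C %/ 2)%N; lia.
  by subst C; case: s1 => ?; subst s; lia.
by subst C; case: s1 => ?; subst s; lia.
Qed.

Lemma normQ1_eq4 (d : nat) (a b : int) :
  normQ d a b = 1 -> a ^+ 2 - d%:Z * b ^+ 2 = 4.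
Proof.
rewrite /normQ => N1; apply: (@intr_inj rat).
by rewrite -[_%:~R](@divfK _ (4%:R : rat)) // N1 mul1r.
Qed.

Lemma qelt_gt1_neq0 (d : nat) (a b : int) :
  a ^+ 2 - d%:Z * b ^+ 2 = 4 -> 1 < qelt d a b -> b != 0.
Proof.
move=> E; apply: contraTneq => b0; move: E; rewrite b0.
rewrite /qelt mulr0z mul0r addr0 ltr_pdivlMr ?ltr0n // mul1r.
have -> : (2%:R : algC) = (2 : int)%:~R by [].
rewrite ltr_int; nia.
Qed.

Lemma half_addr_eq_nat_sq (a : int) (n : nat) (s : int) :
  (a%:~R / 2%:R : rat) + s%:~R = (n ^ 2)%N%:R -> a = 2 * (n ^ 2)%N%:Z - 2 * s.
Proof.
move=> E; apply: (@intr_inj rat); rewrite rmorphB !rmorphM /=.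
have -> : (n%:~R * n%:~R : rat) = (n ^ 2)%N%:R by rewrite natrX expr2.
have -> : (2 : int)%:~R = 2%:R :> rat by [].
rewrite -E.
by field.
Qed.

Theorem mainTheorem8 (p1 p2 : nat) (a b : int) :
  prime p1 -> prime p2 -> p1 != p2 ->
  (p1 %% 4 = 1)%N -> (p2 %% 4 = 1)%N ->
  fundamental_unit (p1 * p2)%N a b ->
  normQ (p1 * p2)%N a b = 1 ->
  ~ (exists n : nat, (a%:~R / 2%:R : rat) + 1 = (n ^ 2)%N%:R) /\
  ~ (exists n : nat, (a%:~R / 2%:R : rat) - 1 = (n ^ 2)%N%:R).
Proof.
move=> _ _ _ p1_4 p2_4 [_ [gt1 _]] /normQ1_eq4 E.
have d4 : ((p1 * p2) %% 4 = 1)%N by rewrite -modnMm p1_4 p2_4.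
have B0 : (0 < `|b|)%N by rewrite absz_gt0 (qelt_gt1_neq0 _ _ _ E gt1).
have Eb : b ^+ 2 = `|b|%:Z ^+ 2 by rewrite abszE real_normK ?num_real.
rewrite Eb in E.
split => -[n En].
  have aE := half_addr_eq_nat_sq a n 1 En.
  by apply/eqP: (quartic_neq_mul_sq _ n _ _ d4 B0 (or_intror erefl)); lia.
have aE := half_addr_eq_nat_sq a n (-1) En.
by apply/eqP: (quartic_neq_mul_sq _ n _ _ d4 B0 (or_introl erefl)); lia.
Qed.
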